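(* Let $G$ be a finite group and $C$ a conjugacy class of $G$, $C\ne\{1\}$, whose elements generate $G$. Then the power series $\chi_{(G,C)}(t)=\sum_{k\ge0}h_kt^k$ is a rational function of $t$, where $h_k$ is the number of elements $s\in S(G,C)^G_{\mathbf 1}$ of length $k$.
   Context: The factorization semigroup $S(G,C)$ is generated by symbols $x_g$, $g\in C$, subject to $x_{g_1}x_{g_2}=x_{g_2}x_{g_2^{-1}g_1g_2}=x_{g_1g_2g_1^{-1}}x_{g_1}$ ($g_1,g_2\in C$); $\alpha_G:S(G,C)\to G$, $x_g\mapsto g$. The length of $s$ is the number of factors in any expression of $s$ as a product of the $x_g$. For $s=x_{g_1}\cdots x_{g_n}$, $G_s$ is the subgroup generated by $g_1,\dots,g_n$ (well defined). $S(G,C)^G_{\mathbf 1}=\{s: G_s=G,\ \alpha_G(s)=1\}$. *)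

From mathcomp Require Import all_boot all_algebra all_fingroup.
Set Implicit Arguments. Unset Strict Implicit. Unset Printing Implicit Defensive.

Import GroupScope.

Section Factorization.
Variable gT : finGroupType.

(* One elementary application (left-to-right) of one of the defining relations
   x_{g1} x_{g2} = x_{g2} x_{g2^-1 g1 g2}  and  x_{g1} x_{g2} = x_{g1 g2 g1^-1} x_{g1}
   (g1, g2 in C) at positions i, i+1 of the word s, producing t.
   Note: in MathComp  g1 ^ g2 = g2^-1 * g1 * g2. *)
Definition hstep (C : {set gT}) (s t : seq gT) : bool :=
  [exists i : 'I_(size s),
    let a := nth 1 s i in let b := nth 1 s i.+1 in
    [&& i.+1 < size s, a \in C, b \in C &
       (t == take i s ++ [:: b; a ^ b] ++ drop i.+2 s)
    || (t == take i s ++ [:: a * b * a^-1; a] ++ drop i.+2 s)]].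

(* Symmetric version on words of length k; the congruence generated by the
   relations, restricted to words of length k, is  connect (hrel C k). *)
Definition hrel (C : {set gT}) (k : nat) : rel (k.-tuple gT) :=
  fun s t => hstep C s t || hstep C t s.

(* Words of length k over C representing elements of S(G,C)^G_1:
   the letters generate G and their product is 1. *)
Definition Wk (G : {group gT}) (C : {set gT}) (k : nat) : {set k.-tuple gT} :=
  [set t : k.-tuple gT | [&& all (fun x => x \in C) t,
                            <<[set x in (t : seq gT)]>> == (G : {set gT})
                          & \prod_(x <- t) x == 1]].

(* h_k : number of elements of S(G,C)^G_1 of length k, i.e. number of
   equivalence classes of such words. *)
Definition hcount (G : {group gT}) (C : {set gT}) (k : nat) : nat :=
  #|[set [set u | connect (@hrel C k) t u] | t in Wk G C k]|.

End Factorization.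

From mathcomp Require Import all_boot all_algebra all_fingroup.
From Stdlib Require Import Classical Relation_Operators Lia.
From mathcomp Require Import zify.
Import GRing.Theory.
Set Implicit Arguments. Unset Strict Implicit. Unset Printing Implicit Defensive.

(* Let C = x^G and n = #[x].  The word x^n has product 1, and Hurwitz moves can
   gather any n + 1 equal letters d of a long word to the front and then
   conjugate the block d^n into x^n using the remaining letters, which still
   generate G.  Hence for k >= n |C| every class of length n + k is the class of
   some x^n w with w of length k, so h (n + k) <= h k.  A sequence of naturals
   with this property is eventually n-periodic, so (1 - t^n) chi(t) is a
   polynomial. *)

#[local] Arguments rst_step {A R x y} _.
#[local] Arguments rst_refl {A R x}.
#[local] Arguments rst_sym {A R x y} _.
#[local] Arguments rst_trans {A R x y z} _ _.

Section HurwitzMoves.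
Local Open Scope group_scope.
Variables (gT : finGroupType) (C : {set gT}).

Definition hurwitz_move (s t : seq gT) : Prop :=
  exists p q a b, [/\ a \in C, b \in C, s = p ++ [:: a, b & q] &
     t = p ++ [:: b, a ^ b & q] \/ t = p ++ [:: a * b * a^-1, a & q]].

Definition hurwitz_equiv := clos_refl_sym_trans (seq gT) hurwitz_move.

Definition gen_word (s : seq gT) : {set gT} := <<[set y in s]>>.

Lemma hstepP s t : reflect (hurwitz_move s t) (hstep C s t).
Proof.
apply: (iffP idP) => [|[p [q [a [b [aC bC -> ht]]]]]].
  case/existsP=> i /=; set a := nth 1 s i; set b := nth 1 s i.+1.
  case/and4P=> lt aC bC ht.
  have es : s = take i s ++ [:: a, b & drop i.+2 s].
    by rewrite /a /b -drop_nth // -drop_nth 1?ltnW // cat_take_drop.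
  exists (take i s), (drop i.+2 s), a, b; split=> //.
  by case/orP: ht => /eqP ->; [left|right].
have lt : size p < size (p ++ [:: a, b & q]).
  by rewrite size_cat /= addnS ltnS leq_addr.
apply/existsP; exists (Ordinal lt) => /=.
have nth_b y : nth y (p ++ [:: a, b & q]) (size p).+1 = b.
  by rewrite nth_cat ltnNge leqnSn /= subSn // subnn.
have drop_q : drop (size p).+2 (p ++ [:: a, b & q]) = q.
  by rewrite -addn2 drop_cat ltnNge leq_addr /= addKn /= drop0.
rewrite nth_cat ltnn subnn nth_b drop_q take_size_cat // aC bC size_cat /=.
rewrite !addnS !ltnS leq_addr /=.
by case: ht => ->; rewrite eqxx ?orbT.
Qed.

Lemma hurwitz_equiv_cat p q s t :
  hurwitz_equiv s t -> hurwitz_equiv (p ++ s ++ q) (p ++ t ++ q).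
Proof.
rewrite /hurwitz_equiv.
elim=> [s' t'|s'|s' t' _|s' u t' _ h1 _ h2]; last exact: rst_trans h2.
- case=> p' [q' [a [b [aC bC -> ht]]]]; apply: rst_step.
  exists (p ++ p'), (q' ++ q), a, b; split; rewrite // -!catA //.
  by case: ht => ->; [left|right]; rewrite -catA.
- exact: rst_refl.
- exact: rst_sym.
Qed.

Lemma hurwitz_equiv_catl p s t :
  hurwitz_equiv s t -> hurwitz_equiv (p ++ s) (p ++ t).
Proof. by move/(hurwitz_equiv_cat p [::]); rewrite !cats0. Qed.

Lemma hurwitz_equiv_catr q s t :
  hurwitz_equiv s t -> hurwitz_equiv (s ++ q) (t ++ q).
Proof. exact: hurwitz_equiv_cat [::] q s t. Qed.

Lemma hurwitz_equiv_invariant (T : Type) (f : seq gT -> T) :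
    (forall s t, hurwitz_move s t -> f t = f s) ->
  forall s t, hurwitz_equiv s t -> f t = f s.
Proof.
move=> f_move s t.
by elim=> [s' t' /f_move|//|s' t' _|s' u t' _ h1 _ h2]; congruence.
Qed.

Lemma hurwitz_equiv_size s t : hurwitz_equiv s t -> size t = size s.
Proof.
apply: hurwitz_equiv_invariant => {}s {}t [p [q [a [b [_ _ -> [->|->]]]]]].
all: by rewrite !size_cat.
Qed.

Lemma hurwitz_equiv_prod s t :
  hurwitz_equiv s t -> \prod_(y <- t) y = \prod_(y <- s) y.
Proof.
move/(hurwitz_equiv_invariant (f := fun w => \prod_(y <- w) y)); apply.
move=> {}s {}t [p [q [a [b [_ _ -> [->|->]]]]]].
all: by rewrite !big_cat !big_cons /= !mulgA ?mulgK ?mulgKV.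
Qed.

Lemma gen_set2J (a b g : gT) :
  g \in <<[set a]>> -> <<[set a; b ^ g]>> = <<[set a; b]>>.
Proof.
move=> ga; have a_in c : a \in <<[set a; c]>> := mem_gen (set21 a c).
have c_in c : c \in <<[set a; c]>> := mem_gen (set22 a c).
have g_in c : g \in <<[set a; c]>> by apply: subsetP ga; rewrite genS ?subsetUl.
apply/eqP; rewrite eqEsubset !gen_subG !subUset !sub1set !a_in.
rewrite groupJ ?c_in ?g_in //=.
by rewrite -{1}(conjgK g b) groupJ ?groupV ?c_in ?g_in.
Qed.

Lemma hurwitz_equiv_gen s t : hurwitz_equiv s t -> gen_word t = gen_word s.
Proof.
apply: hurwitz_equiv_invariant => {}s {}t [p [q [a [b [_ _ -> ht]]]]].
have gen_pair c d :
    gen_word (p ++ [:: c, d & q]) = <<[set c; d]>> <*> [set y in p ++ q].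
  rewrite joing_idl joingE /gen_word; congr <<_>>; apply/setP => y.
  by rewrite !inE !mem_cat !inE; do 2!case: (y == _); rewrite ?orbT.
rewrite gen_pair; case: ht => ->; rewrite gen_pair.
  by rewrite gen_set2J ?mem_gen ?set11 // setUC.
have -> : a * b * a^-1 = b ^ a^-1 by rewrite conjgE invgK mulgA.
by rewrite setUC gen_set2J // groupV mem_gen ?set11.
Qed.

Lemma connect_hrelP k (s t : k.-tuple gT) :
  reflect (hurwitz_equiv s t) (connect (@hrel gT C k) s t).
Proof.
have hrel_sym : symmetric (@hrel gT C k) by move=> u v; rewrite /hrel orbC.
apply: (iffP idP) => [|].
  case/connectP=> pth; elim: pth s => [|u pth IH] s /= => [_ ->|/andP[su pu] et].
    exact: rst_refl.
  apply: rst_trans (IH u pu et).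
  case/orP: su => /hstepP su; first exact: rst_step.
  exact: rst_sym (rst_step su).
suff: forall u v, hurwitz_equiv u v -> forall (s t : k.-tuple gT),
    u = s -> v = t -> connect (@hrel gT C k) s t by move=> H /H; apply.
move=> {s t} u v; rewrite /hurwitz_equiv.
elim=> [u' v' uv|u'|u' v' _ IH|u' w v' uw IH1 _ IH2] s t es et.
- by apply: connect1; rewrite /hrel -es -et (introT (hstepP _ _) uv).
- by rewrite (val_inj (etrans (esym es) et)).
- by rewrite (sym_connect_sym hrel_sym) IH.
have w_k : size w == k by rewrite (hurwitz_equiv_size uw) es size_tuple.
exact: connect_trans (IH1 s (Tuple w_k) es erefl) (IH2 (Tuple w_k) t erefl et).
Qed.

Lemma hurwitz_equiv_pull d u v : d \in C -> all (mem C) u ->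
  hurwitz_equiv (u ++ d :: v) (d :: map (conjg^~ d) u ++ v).
Proof.
move=> dC; elim: u => [|y u IH] /=; first by move=> _; apply: rst_refl.
case/andP=> yC uC; apply: rst_trans (hurwitz_equiv_catl [:: y] (IH uC)) _.
by apply: rst_step; exists [::], (map (conjg^~ d) u ++ v), y, d; split=> //; left.
Qed.

End HurwitzMoves.

Definition admissible (gT : finGroupType) (G : {group gT}) (C : {set gT})
    (s : seq gT) : bool :=
  [&& all (mem C) s, gen_word s == G & \prod_(y <- s) y == 1]%g.

Lemma mem_Wk (gT : finGroupType) (G : {group gT}) (C : {set gT}) k
    (t : k.-tuple gT) :
  (t \in Wk G C k) = admissible G C t.
Proof. by rewrite inE. Qed.

Lemma prodg_nseq (gT : finGroupType) m (y : gT) :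
  (\prod_(i <- nseq m y) i = y ^+ m)%g.
Proof. by elim: m => [|m IH]; rewrite ?big_nil // big_cons IH expgS. Qed.

Lemma pigeonhole_count (T : finType) (A : {set T}) m (t : seq T) :
  all (mem A) t -> m * #|A| < size t -> exists2 d, d \in A & m < count_mem d t.
Proof.
move=> tA lt_t.
have [d /andP[dA lt_d]|none] := pickP [pred d in A | m < count_mem d t].
  by exists d.
have size_sum : size t = \sum_(d in A) count_mem d t.
  elim: t tA {lt_t none} => [|y t IH] /=; first by rewrite big1.
  case/andP=> yA /IH->; rewrite big_split /= [X in X + _](bigD1 y) //= eqxx.
  rewrite [\sum_(i in A | i != y) _]big1 // => d /andP[_ /negbTE].
  by rewrite eq_sym => ->.
move: lt_t; rewrite size_sum mulnC -sum_nat_const ltnNge leq_sum // => d dA.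
by rewrite leqNgt; apply/negP => lt_d; move: (none d); rewrite /= dA lt_d.
Qed.

Section ConjugacyClassWords.
Local Open Scope group_scope.
Variables (gT : finGroupType) (G : {group gT}) (x : gT).
Hypothesis xG : x \in G.
Local Notation C := (x ^: G).
Local Notation n := #[x].
Local Notation hurwitz_equiv := (hurwitz_equiv C).

Lemma mem_classG a : a \in C -> a \in G.
Proof. exact: subsetP (class_subG xG (subxx G)) a. Qed.

Lemma mem_classJ a g : a \in C -> g \in G -> a ^ g \in C.
Proof. by case/imsetP=> h hG -> gG; rewrite -conjgM memJ_class // groupM. Qed.

Lemma expg_class_order a : a \in C -> a ^+ n = 1.
Proof. by case/imsetP=> h _ ->; rewrite -conjXg expg_order conj1g. Qed.

Lemma all_class_nseq m a : a \in C -> all (mem C) (nseq m a).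
Proof. by move=> aC; rewrite all_nseq /= aC orbT. Qed.

Lemma hurwitz_equiv_all s t :
  hurwitz_equiv s t -> all (mem C) t = all (mem C) s.
Proof.
move/(hurwitz_equiv_invariant (f := all (mem C))); apply.
move=> {}s {}t [p [q [a [b [aC bC -> [->|->]]]]]]; rewrite !all_cat /= aC bC.
  by rewrite mem_classJ ?mem_classG.
have -> : a * b * a^-1 = b ^ a^-1 by rewrite conjgE invgK mulgA.
by rewrite mem_classJ ?groupV ?mem_classG.
Qed.

Lemma hurwitz_equiv_push b w : b \in C -> all (mem C) w ->
  hurwitz_equiv (b :: w) (w ++ [:: b ^ \prod_(y <- w) y]).
Proof.
elim: w b => [|y w IH] b bC /=.
  by rewrite big_nil conjg1 => _; apply: rst_refl.
case/andP=> yC wC; rewrite big_cons conjgM.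
have byC : b ^ y \in C by rewrite mem_classJ ?mem_classG.
apply: rst_trans (hurwitz_equiv_catl [:: y] (IH _ byC wC)).
by apply: rst_step; exists [::], w, b, y; split=> //; left.
Qed.

(* Carry a letter a of w once around the block e^n: the block becomes (e^a)^n,
   and a comes back unchanged because (e^a)^n = 1. *)
Lemma hurwitz_equiv_block_conj1 e a w : e \in C -> all (mem C) w -> a \in w ->
  hurwitz_equiv (nseq n e ++ w) (nseq n (e ^ a) ++ w).
Proof.
move=> eC wC aw; have aC : a \in C by apply: (allP wC).
case/splitPr: aw wC => u v; rewrite all_cat => /andP[uC _].
have eaC : e ^ a \in C by rewrite mem_classJ ?mem_classG.
apply: rst_trans (hurwitz_equiv_catl _ (hurwitz_equiv_pull v aC uC)) _.
set r := map _ u ++ v.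
apply: rst_trans (hurwitz_equiv_pull r aC (all_class_nseq n eC)) _.
rewrite map_nseq.
have push_a := hurwitz_equiv_push aC (all_class_nseq n eaC).
apply: rst_trans (hurwitz_equiv_catr r push_a) _.
rewrite prodg_nseq expg_class_order // conjg1 -catA.
exact/hurwitz_equiv_catl/rst_sym/hurwitz_equiv_pull.
Qed.

Lemma hurwitz_equiv_block_conj e w g : e \in C -> all (mem C) w ->
  g \in gen_word w -> hurwitz_equiv (nseq n e ++ w) (nseq n (e ^ g) ++ w).
Proof.
move=> eC wC /gen_prodgP[m [c cw ->]].
suff conj_prod r : all (mem w) r -> forall e, e \in C ->
    hurwitz_equiv (nseq n e ++ w) (nseq n (e ^ \prod_(y <- r) y) ++ w).
  rewrite -(big_map c xpredT id); apply: conj_prod eC.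
  by apply/allP=> _ /mapP[i _ ->]; have := cw i; rewrite inE.
elim: r => [|a r IH] /= => [_ f _|/andP[aw rw] f fC].
  by rewrite big_nil conjg1; apply: rst_refl.
apply: rst_trans (hurwitz_equiv_block_conj1 fC wC aw) _.
have aC : a \in C := allP wC a aw.
by rewrite big_cons conjgM; apply: IH; rewrite // mem_classJ ?mem_classG.
Qed.

Lemma hurwitz_equiv_collect m t d : d \in C -> all (mem C) t ->
  m <= count_mem d t -> exists w, hurwitz_equiv t (nseq m d ++ w).
Proof.
move=> dC; elim: m t => [|m IH] t tC le_m; first by exists t; apply: rst_refl.
have dt : d \in t by rewrite -has_pred1 has_count (leq_trans _ le_m).
case/splitPr: dt tC le_m => u v; rewrite all_cat /= => /and3P[uC _ vC].
have count_conj : count_mem d (map (conjg^~ d) u) = count_mem d u.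
  rewrite count_map; apply: eq_count => y /=.
  have conjg_dd : d ^ d = d by rewrite conjgE mulKg.
  by rewrite -{2}conjg_dd (inj_eq (conjg_inj d)).
have rC : all (mem C) (map (conjg^~ d) u ++ v).
  rewrite all_cat vC andbT all_map; apply/allP => y /(allP uC) yC /=.
  by rewrite mem_classJ ?mem_classG.
rewrite count_cat /= eqxx addnS ltnS -count_conj -count_cat => /(IH _ rC)[w rw].
exists w; apply: rst_trans (hurwitz_equiv_pull v dC uC) _.
exact: hurwitz_equiv_catl [:: d] _ _ rw.
Qed.

(* By pigeonhole a long word has n + 1 letters d; gathering n of them in front
   leaves a word w that still contains d, hence still generates G, and the block
   d^n can then be conjugated into x^n by letters of w. *)
Lemma hurwitz_equiv_xblock t : admissible G C t -> n * #|C| < size t ->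
  exists2 w, admissible G C w & hurwitz_equiv t (nseq n x ++ w).
Proof.
case/and3P=> tC /eqP tG /eqP t1 /(pigeonhole_count tC)[d dC lt_n].
have [w' tw'] := hurwitz_equiv_collect dC tC lt_n.
rewrite -addn1 nseqD -catA /= in tw'; set w := d :: w' in tw'.
have wC : all (mem C) w.
  by move: tC; rewrite -(hurwitz_equiv_all tw') all_cat => /andP[].
have wG : gen_word w = G.
  rewrite -tG -(hurwitz_equiv_gen tw') /gen_word; congr <<_>>; apply/setP => y.
  by rewrite !inE mem_cat mem_nseq order_gt0 inE orbA orbb.
have w1 : \prod_(y <- w) y = 1.
  rewrite -[RHS]t1 -(hurwitz_equiv_prod tw') big_cat /= prodg_nseq.
  by rewrite expg_class_order // mul1g.
exists w; first by rewrite /admissible wC wG w1 !eqxx.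
apply: rst_trans tw' _; case/imsetP: (dC) => h hG dE.
have := hurwitz_equiv_block_conj (g := h^-1) dC wC; rewrite dE conjgK; apply.
by rewrite wG groupV.
Qed.

(* Every class of words of length n + k contains a word x^n w with w admissible
   of length k, and the class of x^n w only depends on the class of w. *)
Lemma hcount_shift_le k : n * #|C| <= k -> hcount G C (n + k) <= hcount G C k.
Proof.
move=> le_k; pose xcat (w : k.-tuple gT) := cat_tuple (nseq_tuple n x) w.
pose lift (S : {set k.-tuple gT}) : {set (n + k).-tuple gT} :=
  [set u | [exists w in S, connect (@hrel gT C (n + k)) (xcat w) u]].
rewrite /hcount; apply: leq_trans (leq_imset_card lift _); apply: subset_leq_card.
apply/subsetP => _ /imsetP[t tW ->]; rewrite mem_Wk in tW.
have lt_t : n * #|C| < size t by rewrite size_tuple; have := order_gt0 x; lia.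
have [w wA tw] := hurwitz_equiv_xblock tW lt_t.
have w_k : size w == k.
  have := hurwitz_equiv_size tw.
  by rewrite size_cat size_nseq size_tuple => /addnI ->.
pose wt : k.-tuple gT := Tuple w_k.
apply/imsetP; exists [set u | connect (@hrel gT C k) wt u].
  by apply/imsetP; exists wt; rewrite ?mem_Wk.
apply/setP => u; rewrite !inE; apply/idP/existsP => [/connect_hrelP tu|[w']].
  exists wt; rewrite inE connect0; apply/connect_hrelP.
  exact: rst_trans (rst_sym tw) tu.
rewrite inE => /andP[/connect_hrelP ww' /connect_hrelP w'u]; apply/connect_hrelP.
exact: rst_trans tw (rst_trans (hurwitz_equiv_catl _ ww') w'u).
Qed.

End ConjugacyClassWords.

Lemma nat_ex_minimizer (a : nat -> nat) N :
  exists2 K, N <= K & forall k, N <= k -> a K <= a k.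
Proof.
suff min_below v K : N <= K -> a K <= v ->
    exists2 K', N <= K' & forall k, N <= k -> a K' <= a k.
  exact: min_below (a N) N (leqnn N) (leqnn _).
elim: v K => [|v IH] K NK le_aK.
  by exists K => // k _; rewrite (leq_trans le_aK).
have [[k Nk lt_k]|no_smaller] := classic (exists2 k, N <= k & a k < a K).
  by apply: (IH k Nk); rewrite -ltnS (leq_trans lt_k).
exists K => // k Nk; rewrite leqNgt; apply/negP => lt_k.
by apply: no_smaller; exists k.
Qed.

Lemma nonincreasing_eventually_constant (a : nat -> nat) N :
    (forall k, N <= k -> a k.+1 <= a k) ->
  exists M, forall k, M <= k -> a k.+1 = a k.
Proof.
move=> a_dec; have [K NK minK] := nat_ex_minimizer a N.
have const k : K <= k -> a k = a K.
  elim: k => [|k IH]; first by rewrite leqn0 => /eqP->.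
  rewrite leq_eqVlt => /predU1P[<- //|]; rewrite ltnS => Kk.
  apply/eqP; rewrite eqn_leq -{1}(IH Kk) a_dec ?minK //; lia.
by exists K => k Kk; rewrite !const //; lia.
Qed.

(* The window sums S k = h k + ... + h (k + n - 1) satisfy
   S (k + 1) - S k = h (n + k) - h k, so they are eventually nonincreasing,
   hence eventually constant. *)
Lemma eventually_periodic (h : nat -> nat) n N : 0 < n ->
    (forall k, N <= k -> h (n + k) <= h k) ->
  exists M, forall k, M <= k -> h (n + k) = h k.
Proof.
move=> n_gt0 h_dec; pose S k := \sum_(i < n) h (k + i).
have S_succ k : S k.+1 + h k = S k + h (n + k).
  have recl : \sum_(i < n.+1) h (k + i) = h k + S k.+1.
    rewrite big_ord_recl addn0; congr (_ + _).
    by apply: eq_bigr => i _; rewrite lift0 addSnnS.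
  have recr : \sum_(i < n.+1) h (k + i) = S k + h (n + k).
    by rewrite big_ord_recr addnC.
  by rewrite addnC -recl recr.
have [M S_const] : exists M, forall k, M <= k -> S k.+1 = S k.
  apply: (nonincreasing_eventually_constant (N := N)) => k Nk.
  by have := S_succ k; have := h_dec k Nk; lia.
by exists M => k Mk; have := S_succ k; rewrite S_const //; lia.
Qed.

Lemma coef_conv_1subXn (R : nzRingType) n (F : nat -> R) k :
  (\sum_(i < k.+1) (1 - 'X^n : {poly R})`_i * F (k - i)%N
    = F k - (if (k < n)%N then 0 else F (k - n)%N))%R.
Proof.
pose P := (\poly_(i < k.+1) F i)%R.
rewrite (eq_bigr (fun i : 'I_k.+1 => (1 - 'X^n)`_i * P`_(k - i))%R) => [|i _].
  by rewrite -coefM mulrBl mul1r coefB coefXnM !coef_poly ltnSn ltnS leq_subr.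
by rewrite coef_poly ltnS leq_subr.
Qed.

Theorem proposition4p4 (gT : finGroupType) (G : {group gT}) (C : {set gT}) :
  (exists2 x, x \in G & C = (x ^: G)%g) ->
  C != [set 1%g] ->
  <<C>>%g = G :> {set gT} ->
  exists p q : {poly rat},
    (q != 0)%R /\
    forall k : nat,
      (\sum_(i < k.+1) q`_i * ((hcount G C (k - i)%N)%:R : rat) = p`_k)%R.
Proof.
case=> x xG -> _ _; set n := #[x]%g; set h := hcount G (x ^: G)%g.
have [M h_periodic] : exists M, forall k, M <= k -> h (n + k) = h k.
  exact: eventually_periodic (order_gt0 x) (hcount_shift_le xG).
pose c i := ((h i)%:R - (if (i < n)%N then 0 else (h (i - n)%N)%:R) : rat)%R.
exists (\poly_(i < M + n) c i)%R.
exists (1 - 'X^n)%R; split=> [|k].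
  apply/eqP => /(congr1 (coefp 0)); rewrite /= coefB coef1 coefXn coef0.
  by rewrite eqxx (ltn_eqF (order_gt0 x)) subr0 => /eqP; rewrite oner_eq0.
rewrite (coef_conv_1subXn _ (fun j => (h j)%:R)%R) coef_poly.
case: (ltnP k (M + n)) => // le_k.
have n_k : n <= k by lia.
by rewrite ltnNge n_k /= -{1}(subnKC n_k) h_periodic ?subrr //; lia.
Qed.
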